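(* Let $q\in K_+$ and let $m$ be an irreducible Metzler $n\times n$ matrix. Define $l(x)=\dfrac{\langle q,mx\rangle}{\langle q,x\rangle}$ for $x\in K_+$. Then $l$ is Lipschitz continuous from $(K_+,d)$ to $(\mathbb R,|\cdot|)$, where $d$ is Hilbert's projective metric, with Lipschitz constant satisfying \[ \mathrm{Lip}\,l\le \sup_{x\in K_0}\inf_{a\in\mathbb R}\frac{\langle q,|m-a\,\mathrm{id}|\,x\rangle}{\langle q,x\rangle}. \]
   Context: A matrix is Metzler if its off-diagonal entries are nonnegative; it is irreducible if for every partition $\{1,\dots,n\}=I\sqcup J$ into nonempty sets some $m_{ij}$ with $i\in I$, $j\in J$ is positive. $K$ is the nonnegative orthant, $K_+$ the positive orthant, $K_0=K\setminus\{0\}$. Hilbert's projective metric on $K_+$ is $d(x,y)=\log\max_{1\le i,j\le n}\frac{x_iy_j}{x_jy_i}$. For a matrix $m=(m_{ij})$, $|m|=(|m_{ij}|)$ denotes the entrywise absolute value. *)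

From HB Require Import structures.
From mathcomp Require Import all_boot all_order all_algebra.
From mathcomp Require Import all_classical all_reals all_analysis.
Set Implicit Arguments. Unset Strict Implicit. Unset Printing Implicit Defensive.
Import Order.TTheory GRing.Theory Num.Theory.
Local Open Scope ring_scope.

Section Defs.
Variables (R : realType) (n : nat).

Definition inner (u v : 'cV[R]_n) : R := \sum_(i < n) u i 0 * v i 0.

Definition posorth (x : 'cV[R]_n) : Prop := forall i, 0 < x i 0.
Definition nonnegorth (x : 'cV[R]_n) : Prop := forall i, 0 <= x i 0.
Definition K0 (x : 'cV[R]_n) : Prop := nonnegorth x /\ x <> 0.

Definition metzler (m : 'M[R]_n) : Prop :=
  forall i j : 'I_n, i != j -> 0 <= m i j.

Definition irreducible_mx (m : 'M[R]_n) : Prop :=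
  forall I : {set 'I_n}, I != finset.set0 -> ~: I != finset.set0 ->
    exists i j, [/\ i \in I, j \in ~: I & 0 < m i j].

(* Hilbert's projective metric:  log max_{i,j} x_i y_j / (x_j y_i)
   (the max is taken with neutral element 1, which is attained at i = j
   whenever n >= 1) *)
Definition hilbert_d (x y : 'cV[R]_n) : R :=
  ln (\big[Num.max/1]_(i < n) \big[Num.max/1]_(j < n)
        ((x i 0 * y j 0) / (x j 0 * y i 0))).

Definition absmx (m : 'M[R]_n) : 'M[R]_n := \matrix_(i, j) `|m i j|.

Definition rayleigh (q : 'cV[R]_n) (m : 'M[R]_n) (x : 'cV[R]_n) : R :=
  inner q (m *m x) / inner q x.

Definition lip_bound (q : 'cV[R]_n) (m : 'M[R]_n) : \bar R :=
  ereal_sup [set ereal_inf [set ((inner q (absmx (m - a%:M) *m x) / inner q x)%:E)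
                             | a in [set: R]]
            | x in K0].

Definition lip_const (f : 'cV[R]_n -> R) : \bar R :=
  ereal_sup [set r : \bar R | exists x y : 'cV[R]_n,
      [/\ posorth x, posorth y, hilbert_d x y != 0 &
           r = (`|f x - f y| / hilbert_d x y)%:E]].

End Defs.

From HB Require Import structures.
From mathcomp Require Import all_boot all_order all_algebra.
From mathcomp Require Import all_classical all_reals all_analysis.
From mathcomp Require Import ring lra.
Import Order.TTheory GRing.Theory Num.Theory.
Local Open Scope ring_scope.
Set Implicit Arguments. Unset Strict Implicit.

(* For every shift a, l(x) - a = <q, (m - a id) x> / <q, x>.  Comparing two
   positive vectors whose coordinate ratios v_j / u_j vary by a factor at most
   rho gives |l(u) - l(v)| <= (rho - 1) <q, |m - a id| u> / <q, u>.  Walking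
   from x to y in N steps along x_i (y_i / x_i)^(k/N), each step has
   rho = exp(d(x,y) / N).  Hence if L bounds inf_a <q, |m - a id| u> / <q, u>
   for every u in K_+, then |l(x) - l(y)| <= N (exp(d/N) - 1) L, and
   N (exp(d/N) - 1) -> d. *)

Lemma expR_sub1_mul_le (R : realType) (t : R) : (expR t - 1) * (1 - t) <= t.
Proof.
have et := expR_gt0 t.
have lin : 1 - t <= expR (- t) by have := expR_ge1Dx (- t); lra.
have : expR t * (1 - t) <= 1.
  by rewrite -[leRHS](mulfV (lt0r_neq0 et)) -expRN ler_wpM2l // ltW.
nra.
Qed.

Lemma le_of_forall_nat_mul (R : archiFieldType) (A B d : R) :
  (forall N : nat, d < N%:R -> A * (N%:R - d) <= N%:R * B) -> A <= B.
Proof.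
move=> le_N; rewrite leNgt; apply/negP => ltBA.
have r0 : 0 <= `|A * d / (A - B)| + `|d| by rewrite addr_ge0.
have := archi_boundP r0; set N := Num.Def.archi_bound _ => ltrN.
have dN : d < N%:R by apply: le_lt_trans ltrN; rewrite ler_wpDl // ler_norm.
have : A * d / (A - B) < N%:R.
  by apply: le_lt_trans ltrN; rewrite ler_wpDr // ler_norm.
rewrite ltr_pdivrMr ?subr_gt0 //.
have := le_N N dN; nra.
Qed.

Lemma norm_sub_le_telescope (R : numDomainType) (f : nat -> R) (b : R) (N : nat) :
  (forall k, (k < N)%N -> `|f k - f k.+1| <= b) -> `|f 0%N - f N| <= N%:R * b.
Proof.
elim: N => [|N IH] step; first by rewrite subrr normr0 mul0r.
rewrite -(subrKA (f N)) mulrSr mulrDl mul1r.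
apply: le_trans (ler_normD _ _) _; apply: lerD.
  by apply: IH => k ltkN; apply: step; rewrite ltnS ltnW.
exact: step.
Qed.

Lemma cross_norm_le (R : realFieldType) (a b rho : R) :
  0 < a -> 0 < b -> a <= rho * b -> b <= rho * a -> `|a - b| <= (rho - 1) * a.
Proof.
move=> a0 b0 hab hba.
have rho0 : 0 < rho by nra.
rewrite ler_norml; apply/andP; split; nra.
Qed.

Section RayleighQuotient.
Variables (R : realType) (n : nat) (q : 'cV[R]_n).
Hypotheses (n_gt0 : (0 < n)%N) (q_pos : posorth q).
Implicit Types (u v : 'cV[R]_n) (B m : 'M[R]_n).

Lemma inner_mulmx B u :
  inner q (B *m u) = \sum_i \sum_j q i 0 * B i j * u j 0.
Proof.
apply: eq_bigr => i _; rewrite mxE big_distrr /=.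
by apply: eq_bigr => j _; rewrite mulrA.
Qed.

Lemma inner_ge0 u : nonnegorth u -> 0 <= inner q u.
Proof. by move=> u_ge0; apply: sumr_ge0 => i _; rewrite mulr_ge0 ?u_ge0 ?ltW. Qed.

Lemma inner_gt0 u : posorth u -> 0 < inner q u.
Proof.
move=> u_pos; rewrite /inner (bigD1 (Ordinal n_gt0)) //=.
rewrite ltr_pwDl ?mulr_gt0 //.
by apply: sumr_ge0 => i _; rewrite mulr_ge0 ?ltW.
Qed.

Lemma rayleigh_absmx_ge0 B u : nonnegorth u -> 0 <= rayleigh q (absmx B) u.
Proof.
move=> u_ge0; rewrite divr_ge0 ?inner_ge0 // => i.
by rewrite mxE sumr_ge0 // => j _; rewrite mxE mulr_ge0.
Qed.

Lemma rayleigh_absmx_le B u : posorth u ->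
  rayleigh q (absmx B) u <= \sum_i \sum_j q i 0 * `|B i j| / q j 0.
Proof.
move=> u_pos; have su_gt0 := inner_gt0 u_pos.
rewrite ler_pdivrMr // inner_mulmx big_distrl; apply: ler_sum => i _.
rewrite big_distrl; apply: ler_sum => j _ /=.
have qu_le : q j 0 * u j 0 <= inner q u.
  rewrite /inner (bigD1 j) //= lerDl.
  by apply: sumr_ge0 => k _; rewrite mulr_ge0 ?ltW.
have -> : q i 0 * absmx B i j * u j 0 = q i 0 * `|B i j| / q j 0 * (q j 0 * u j 0).
  by rewrite mxE; field; rewrite gt_eqF.
by rewrite ler_wpM2l // divr_ge0 ?mulr_ge0 // ltW.
Qed.

Lemma rayleigh_sub_scalar m a u : posorth u ->
  rayleigh q m u - a = rayleigh q (m - a%:M) u.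
Proof.
move=> u_pos; rewrite /rayleigh mulmxBl mul_scalar_mx.
have -> : inner q (m *m u - a *: u) = inner q (m *m u) - a * inner q u.
  rewrite /inner big_distrr -sumrB; apply: eq_bigr => i _ /=; rewrite !mxE; ring.
by field; rewrite gt_eqF ?inner_gt0.
Qed.

Lemma rayleigh_dist_le B u v rho : posorth u -> posorth v ->
  (forall j k, v j 0 * u k 0 <= rho * (v k 0 * u j 0)) ->
  `|rayleigh q B u - rayleigh q B v| <= (rho - 1) * rayleigh q (absmx B) u.
Proof.
move=> u_pos v_pos ratio_le.
have su_gt0 := inner_gt0 u_pos; have sv_gt0 := inner_gt0 v_pos.
set su := inner q u; set sv := inner q v.
have diffE : rayleigh q B u - rayleigh q B v =
    (\sum_i \sum_j q i 0 * B i j * (u j 0 * sv - v j 0 * su)) / (su * sv).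
  rewrite /rayleigh !inner_mulmx -/su -/sv.
  have -> : \sum_i \sum_j q i 0 * B i j * (u j 0 * sv - v j 0 * su) =
      (\sum_i \sum_j q i 0 * B i j * u j 0) * sv
    - (\sum_i \sum_j q i 0 * B i j * v j 0) * su.
    rewrite !big_distrl -sumrB; apply: eq_bigr => i _.
    by rewrite !big_distrl -sumrB; apply: eq_bigr => j _ /=; ring.
  by field; rewrite !gt_eqF.
have cross_le j : `|u j 0 * sv - v j 0 * su| <= (rho - 1) * u j 0 * sv.
  have -> : u j 0 * sv - v j 0 * su = \sum_k q k 0 * (u j 0 * v k 0 - v j 0 * u k 0).
    rewrite /sv /su /inner !big_distrr -sumrB /=.
    by apply: eq_bigr => k _; ring.
  rewrite /sv /inner !big_distrr /=.
  apply: le_trans (ler_norm_sum _ _ _) _; apply: ler_sum => k _.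
  rewrite normrM gtr0_norm // mulrCA -mulrA; apply: ler_wpM2l; first exact: ltW.
  apply: cross_norm_le; rewrite ?mulr_gt0 //.
    by rewrite mulrC; apply: ratio_le.
  by rewrite [u j 0 * _]mulrC; apply: ratio_le.
rewrite diffE normrM normfV (gtr0_norm (mulr_gt0 su_gt0 sv_gt0)).
rewrite ler_pdivrMr ?mulr_gt0 //.
apply: le_trans (ler_norm_sum _ _ _) _.
have -> : (rho - 1) * rayleigh q (absmx B) u * (su * sv) =
    \sum_i \sum_j q i 0 * `|B i j| * ((rho - 1) * u j 0 * sv).
  rewrite /rayleigh inner_mulmx -/su.
  have -> : \sum_i \sum_j q i 0 * `|B i j| * ((rho - 1) * u j 0 * sv) =
      (rho - 1) * sv * \sum_i \sum_j q i 0 * absmx B i j * u j 0.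
    rewrite big_distrr; apply: eq_bigr => i _ /=.
    by rewrite big_distrr; apply: eq_bigr => j _ /=; rewrite mxE; ring.
  by field; rewrite gt_eqF.
apply: ler_sum => i _; apply: le_trans (ler_norm_sum _ _ _) _.
apply: ler_sum => j _; rewrite !normrM gtr0_norm //.
by apply: ler_wpM2l; [rewrite mulr_ge0 // ltW | exact: cross_le].
Qed.

End RayleighQuotient.

Section GeometricPath.
Variables (R : realType) (n : nat).
Implicit Types x y : 'cV[R]_n.

Lemma hilbert_d_ge0 x y : 0 <= hilbert_d x y.
Proof. by apply: ln_ge0; apply: bigmax_ge_id. Qed.

Lemma ln_ratio_sub_le_hilbert_d x y i j : posorth x -> posorth y ->
  ln (y j 0 / x j 0) - ln (y i 0 / x i 0) <= hilbert_d x y.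
Proof.
move=> x_pos y_pos; have ratio_gt0 k : 0 < y k 0 / x k 0 by rewrite divr_gt0.
have term_gt0 : 0 < x i 0 * y j 0 / (x j 0 * y i 0) by rewrite divr_gt0 ?mulr_gt0.
have term_le : x i 0 * y j 0 / (x j 0 * y i 0) <= \big[Num.max/1]_(i < n)
    \big[Num.max/1]_(j < n) (x i 0 * y j 0 / (x j 0 * y i 0)).
  apply: le_trans (le_bigmax _ _ i).
  exact: (le_bigmax _ (fun j => x i 0 * y j 0 / (x j 0 * y i 0)) j).
have termE : x i 0 * y j 0 / (x j 0 * y i 0) =
    expR (ln (y j 0 / x j 0) - ln (y i 0 / x i 0)).
  rewrite expRD expRN !lnK ?posrE //.
  by field; rewrite !gt_eqF.
rewrite -[leLHS]expRK -termE ler_ln ?posrE //.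
exact: lt_le_trans term_le.
Qed.

Definition geometric_path x y (N k : nat) : 'cV[R]_n :=
  \col_i (x i 0 * expR (ln (y i 0 / x i 0) / N%:R) ^+ k).

Lemma geometric_path_pos x y N k : posorth x -> posorth (geometric_path x y N k).
Proof. by move=> x_pos i; rewrite mxE mulr_gt0 ?exprn_gt0 ?expR_gt0. Qed.

Lemma geometric_path0 x y N : geometric_path x y N 0 = x.
Proof. by apply/matrixP => i j; rewrite mxE (ord1 j) mulr1. Qed.

Lemma geometric_path_end x y N : (0 < N)%N -> posorth x -> posorth y ->
  geometric_path x y N N = y.
Proof.
move=> N_gt0 x_pos y_pos; apply/matrixP => i j; rewrite mxE (ord1 j).
rewrite -expRM_natr mulfVK ?pnatr_eq0 -?lt0n // lnK ?posrE ?divr_gt0 //.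
by rewrite mulrC divfK ?gt_eqF.
Qed.

Lemma geometric_path_ratio_le x y N k j l : posorth x -> posorth y ->
  geometric_path x y N k.+1 j 0 * geometric_path x y N k l 0 <=
  expR (hilbert_d x y / N%:R) *
    (geometric_path x y N k.+1 l 0 * geometric_path x y N k j 0).
Proof.
move=> x_pos y_pos; rewrite !mxE !exprS.
set ej := expR (ln (y j 0 / x j 0) / N%:R); set el := expR (ln (y l 0 / x l 0) / N%:R).
set P := x j 0 * ej ^+ k * (x l 0 * el ^+ k).
have P_ge0 : 0 <= P by rewrite mulr_ge0 ?mulr_ge0 ?exprn_ge0 ?expR_ge0 ?ltW.
have -> : x j 0 * (ej * ej ^+ k) * (x l 0 * el ^+ k) = P * ej by rewrite /P; ring.
have -> : expR (hilbert_d x y / N%:R) * (x l 0 * (el * el ^+ k) * (x j 0 * ej ^+ k)) =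
    P * (expR (hilbert_d x y / N%:R) * el) by rewrite /P; ring.
rewrite ler_wpM2l // /ej /el -expRD ler_expR -mulrDl ler_wpM2r ?invr_ge0 ?ler0n //.
by rewrite -lerBlDr; apply: ln_ratio_sub_le_hilbert_d.
Qed.

End GeometricPath.

Section HilbertLipschitz.
Variables (R : realType) (n : nat) (q : 'cV[R]_n) (m : 'M[R]_n) (L : R).
Hypotheses (n_gt0 : (0 < n)%N) (q_pos : posorth q).
Hypothesis shifted_le :
  forall u, posorth u -> exists a, rayleigh q (absmx (m - a%:M)) u <= L.

Lemma rayleigh_step_le u v rho : posorth u -> posorth v -> 1 <= rho ->
  (forall j k, v j 0 * u k 0 <= rho * (v k 0 * u j 0)) ->
  `|rayleigh q m u - rayleigh q m v| <= (rho - 1) * L.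
Proof.
move=> u_pos v_pos rho_ge1 ratio_le; have [a le_L] := shifted_le u_pos.
have -> : rayleigh q m u - rayleigh q m v =
    (rayleigh q m u - a) - (rayleigh q m v - a) by ring.
rewrite !(rayleigh_sub_scalar n_gt0 q_pos m a) //.
apply: le_trans (rayleigh_dist_le n_gt0 q_pos _ u_pos v_pos ratio_le) _.
by rewrite ler_wpM2l // subr_ge0.
Qed.

Lemma rayleigh_hilbert_lipschitz x y : posorth x -> posorth y ->
  `|rayleigh q m x - rayleigh q m y| <= L * hilbert_d x y.
Proof.
move=> x_pos y_pos; set d := hilbert_d x y; have d_ge0 : 0 <= d := hilbert_d_ge0 x y.
have L_ge0 : 0 <= L.
  have [a le_L] := shifted_le x_pos; apply: le_trans le_L.
  by apply: (rayleigh_absmx_ge0 q_pos) => i; apply: ltW.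
apply: (le_of_forall_nat_mul (d := d)) => N ltdN.
have N_gt0 : 0 < N%:R :> R by apply: le_lt_trans ltdN.
set rho := expR (d / N%:R).
have rho_ge1 : 1 <= rho by rewrite -[1]expR0 ler_expR divr_ge0 // ltW.
have path_le : `|rayleigh q m x - rayleigh q m y| <= N%:R * ((rho - 1) * L).
  have := @norm_sub_le_telescope _ (fun k => rayleigh q m (geometric_path x y N k))
    ((rho - 1) * L) N.
  rewrite /= geometric_path0 geometric_path_end -?(ltr0n R) //; apply=> k _.
  apply: rayleigh_step_le => // [||j l]; try exact: geometric_path_pos.
  exact: geometric_path_ratio_le.
have steps_le : (rho - 1) * (N%:R - d) <= d.
  have := expR_sub1_mul_le (d / N%:R); rewrite -(ler_pM2l N_gt0) -/rho.
  have -> : N%:R * ((rho - 1) * (1 - d / N%:R)) = (rho - 1) * (N%:R - d).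
    by field; rewrite gt_eqF.
  by rewrite mulrCA mulfV ?gt_eqF ?mulr1.
have NL_ge0 : 0 <= N%:R * L by rewrite mulr_ge0 // ltW.
have Nd_ge0 : 0 <= N%:R - d by rewrite subr_ge0; apply: ltW.
apply: le_trans (ler_wpM2r Nd_ge0 path_le) _; nra.
Qed.

End HilbertLipschitz.

Lemma posorth_K0 (R : realType) (n : nat) (u : 'cV[R]_n) :
  (0 < n)%N -> posorth u -> K0 u.
Proof.
move=> n_gt0 u_pos; split=> [i|/matrixP/(_ (Ordinal n_gt0) 0)]; first exact: ltW.
by rewrite mxE => u0; have := u_pos (Ordinal n_gt0); rewrite u0 ltxx.
Qed.

Theorem lemma1 (R : realType) (n : nat) (q : 'cV[R]_n) (m : 'M[R]_n) :
  posorth q -> metzler m -> irreducible_mx m ->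
  (exists C : R, forall x y : 'cV[R]_n, posorth x -> posorth y ->
      `|rayleigh q m x - rayleigh q m y| <= C * hilbert_d x y) /\
  (lip_const (rayleigh q m) <= lip_bound q m)%E.
Proof.
move=> + _ _; case: n q m => [|n] q m q_pos.
  split; first by exists 0 => x y _ _; rewrite mul0r (flatmx0 x) (flatmx0 y) subrr normr0.
  by apply: ge_ereal_sup => r [x [y [_ _ + _]]]; rewrite /hilbert_d big_ord0 ln1 eqxx.
have n_gt0 : (0 < n.+1)%N := ltn0Sn n.
split.
  exists (\sum_i \sum_j q i 0 * `|m i j| / q j 0) => x y x_pos y_pos.
  apply: rayleigh_hilbert_lipschitz => // u u_pos.
  by exists 0; rewrite raddf0 subr0; apply: rayleigh_absmx_le.
pose shifted_inf u := ereal_inf [set (rayleigh q (absmx (m - a%:M)) u)%:E | a in [set: R]].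
have inf_le u : posorth u -> (shifted_inf u <= lip_bound q m)%E.
  by move=> u_pos; apply: ereal_sup_ubound; exists u => //; apply: posorth_K0.
have inf_ge0 u : posorth u -> (0 <= shifted_inf u)%E.
  move=> u_pos; apply/ereal_infP => _ [a _ <-].
  by rewrite lee_fin rayleigh_absmx_ge0 // => i; apply: ltW.
apply: ge_ereal_sup => _ [x [y [x_pos y_pos d_neq0 ->]]].
have d_gt0 : 0 < hilbert_d x y by rewrite lt_neqAle eq_sym d_neq0 hilbert_d_ge0.
case lipE: (lip_bound q m) => [l| |]; last 2 first.
- by rewrite leey.
- by have := le_trans (inf_ge0 x x_pos) (inf_le x x_pos); rewrite lipE.
rewrite lee_fin; apply/ler_addgt0Pr => e e_gt0; rewrite ler_pdivrMr //.
apply: rayleigh_hilbert_lipschitz => // u u_pos.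
have : (shifted_inf u < (l + e)%:E)%E.
  by rewrite (le_lt_trans (inf_le u u_pos)) // lipE lte_fin ltrDl.
by move=> /ereal_inf_lt[_ [a _ <-]]; rewrite lte_fin => /ltW; exists a.
Qed.
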